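(* Let $\phi:\mathcal{E}\to\mathcal{F}$ be a morphism of tropical vector bundles over a tropical cycle $X$. Then the function $\mathrm{rank}(\phi):|X|\to\mathbb{Z}$, $p\mapsto\mathrm{troprank}(\phi_p)$, is well defined (independent of the local trivialization used to define $\phi_p$) and locally constant.
   Context: $\mathbb{T}=\mathbb{R}\cup\{-\infty\}$ with $\oplus=\max$, $\odot=+$; $G(r\times s)$ are $r\times s$ tropical matrices with at most one finite entry per row, $G(r)$ the $r\times r$ ones with exactly one finite entry per row and column. Tropical vector bundles over a tropical cycle $X$ are given by local trivializations $\Phi_i:\pi^{-1}(U_i)\to U_i\times\mathbb{R}^r$ with transition maps $U_i\cap U_j\to G(r)$ (entries regular invertible or constantly $-\infty$), acting via $f_M(a)=M\odot a$ with $-\infty$ entries replaced by $0$. A morphism $\phi:\mathcal{E}\to\mathcal{F}$ of bundles of ranks $e,f$ commutes with projections and on a common local trivialization $U$ is given by $(x,a)\mapsto(x,f_{A(x)}(a))$ for $A:U\to G(f\times e)$ with entries regular invertible or constantly $-\infty$; the stalk map $\phi_p:\mathbb{T}^e\to\mathbb{T}^f$ is the tropical linear map with matrix $A(p)$. The tropical rank: $\mathrm{troprank}(A)=k$ iff all $(k+1)\times(k+1)$ minors (tropical determinants $\bigoplus_\sigma\bigodot_i a_{i\sigma(i)}$ of square submatrices) equal $-\infty$ and some $k\times k$ minor does not. $|X|$ denotes the support of $X$. *)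

From HB Require Import structures.
From mathcomp Require Import all_boot all_order all_fingroup all_algebra.
From mathcomp Require Import all_classical all_reals all_analysis.
From mathcomp Require Import Rstruct Rstruct_topology.
From Stdlib Require Import Rdefinitions.

Set Implicit Arguments.
Unset Strict Implicit.
Unset Printing Implicit Defensive.

Import Order.TTheory GRing.Theory Num.Theory.
Local Open Scope classical_set_scope.
Local Open Scope ring_scope.

Notation RR := Rdefinitions.R.

(* [None] encodes -oo, [Some x] the finite value x. *)
Definition trop := option RR.
Definition minf : trop := None.

Definition tadd (a b : trop) : trop :=
  match a, b with
  | Some x, Some y => Some (Num.max x y)
  | None, _ => b
  | _, None => a
  end.

Definition tmul (a b : trop) : trop :=
  match a, b with
  | Some x, Some y => Some (x + y)
  | _, _ => None
  end.

Definition tdet k (A : 'M[trop]_k) : trop :=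
  \big[tadd/minf]_(s : 'S_k) \big[tmul/Some 0]_(i < k) A i (s i).

Definition has_finite_minor m n (A : 'M[trop]_(m, n)) (k : nat) : Prop :=
  exists (f : 'I_k -> 'I_m) (g : 'I_k -> 'I_n),
    injective f /\ injective g /\ tdet (mxsub f g A) <> minf.

Definition is_troprank m n (A : 'M[trop]_(m, n)) (k : nat) : Prop :=
  ~ has_finite_minor A k.+1 /\ has_finite_minor A k.

Definition in_Gmn m n (A : 'M[trop]_(m, n)) : Prop :=
  forall i (j j' : 'I_n), A i j <> minf -> A i j' <> minf -> j = j'.

Definition in_Gr r (A : 'M[trop]_r) : Prop :=
  (forall i, exists! j, A i j <> minf) /\ (forall j, exists! i, A i j <> minf).

(* f_M(a) = M (.) a, with -oo entries replaced by 0 *)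
Definition fin0 (x : trop) : RR := if x is Some y then y else 0.
Definition fM m n (M : 'M[trop]_(m, n)) (a : 'rV[RR]_n) : 'rV[RR]_m :=
  \row_(i < m) fin0 (\big[tadd/minf]_(j < n) tmul (M i j) (Some (a 0 j))).

Definition reg_entries (T : topologicalType) (reg : set T -> (T -> RR) -> Prop)
    m n (U : set T) (A : T -> 'M[trop]_(m, n)) : Prop :=
  forall i j,
    (forall x, U x -> A x i j = minf) \/
    (exists g : T -> RR, reg U g /\ forall x, U x -> A x i j = Some (g x)).

Record trop_bundle (T : topologicalType) (reg : set T -> (T -> RR) -> Prop)
    (r : nat) := TropBundle {
  tot : topologicalType;
  proj : tot -> T;
  idx : Type;
  chart_dom : idx -> set T;
  triv : idx -> tot -> T * 'rV[RR]_r;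
  triv_inv : idx -> T * 'rV[RR]_r -> tot;
  trans : idx -> idx -> T -> 'M[trop]_r;
  proj_cont : continuous proj;
  chart_open : forall i, open (chart_dom i);
  chart_cover : forall p : T, exists i, chart_dom i p;
  (* Phi_i : pi^{-1}(U_i) -> U_i x R^r is a homeomorphism over U_i *)
  triv_cont : forall i, {within proj @^-1` chart_dom i, continuous (triv i)};
  triv_inv_cont : forall i,
    {within chart_dom i `*` setT, continuous (triv_inv i)};
  triv_fst : forall i e, chart_dom i (proj e) -> (triv i e).1 = proj e;
  triv_inv_proj : forall i x a, chart_dom i x -> proj (triv_inv i (x, a)) = x;
  triv_invK : forall i e, chart_dom i (proj e) -> triv_inv i (triv i e) = e;
  trivK : forall i x a, chart_dom i x -> triv i (triv_inv i (x, a)) = (x, a);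
  trans_G : forall i j x, chart_dom i x -> chart_dom j x -> in_Gr (trans i j x);
  trans_reg : forall i j,
    reg_entries reg (chart_dom i `&` chart_dom j) (trans i j);
  trans_act : forall i j x a, chart_dom i x -> chart_dom j x ->
    triv i (triv_inv j (x, a)) = (x, fM (trans i j x) a)
}.

Definition morph_chart (T : topologicalType) (reg : set T -> (T -> RR) -> Prop)
    e f (E : trop_bundle reg e) (F : trop_bundle reg f)
    (phi : tot E -> tot F)
    (i : idx E) (j : idx F) (U : set T) (A : T -> 'M[trop]_(f, e)) : Prop :=
  [/\ open U,
      U `<=` chart_dom i `&` chart_dom j,
      (forall x, U x -> in_Gmn (A x)),
      reg_entries reg U A &
      (forall x a, U x -> triv j (phi (triv_inv i (x, a))) = (x, fM (A x) a))].

Definition is_bundle_morphism (T : topologicalType)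
    (reg : set T -> (T -> RR) -> Prop)
    e f (E : trop_bundle reg e) (F : trop_bundle reg f)
    (phi : tot E -> tot F) : Prop :=
  (forall v, proj (phi v) = proj v) /\
  (forall p : T, exists i j U A, morph_chart phi i j U A /\ U p).

From Pilot Require Import Defs.
From HB Require Import structures.
From mathcomp Require Import all_boot all_order all_fingroup all_algebra.
From mathcomp Require Import all_classical all_reals all_analysis.
From mathcomp Require Import Rstruct Rstruct_topology.

(* A tropical determinant is finite iff some permutation diagonal consists of
   finite entries, so troprank(A) is the largest size of a matching in the
   bipartite graph of finite entries of A; it depends only on that pattern.
   Changing the trivializations replaces A(p) by a composite with matrices of
   G(r) on both sides; each finite entry of one matrix then forces a chain of
   finite entries through the other, and as G(r) matrices have one finite
   entry per row and column this carries matchings across, so the rank is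
   well defined. On one chart every entry is either constantly
   -oo or everywhere finite, so the pattern, hence the rank, is locally
   constant. *)

Set Implicit Arguments.
Unset Strict Implicit.
Unset Printing Implicit Defensive.
Import Order.TTheory GRing.Theory Num.Theory.
Local Open Scope classical_set_scope.

Lemma taddA : associative tadd.
Proof. by move=> [x|] [y|] [z|] //=; rewrite maxA. Qed.
Lemma taddC : commutative tadd.
Proof. by move=> [x|] [y|] //=; rewrite maxC. Qed.
Lemma tadd0 : left_id minf tadd.
Proof. by case. Qed.
HB.instance Definition _ := Monoid.isComLaw.Build trop minf tadd taddA taddC tadd0.

Lemma tmulA : associative tmul.
Proof. by move=> [x|] [y|] [z|] //=; rewrite addrA. Qed.
Lemma tmulC : commutative tmul.
Proof. by move=> [x|] [y|] //=; rewrite addrC. Qed.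
Lemma tmul1 : left_id (Some 0%R) tmul.
Proof. by move=> [x|] //=; rewrite add0r. Qed.
HB.instance Definition _ :=
  Monoid.isComLaw.Build trop (Some 0%R) tmul tmulA tmulC tmul1.

Lemma tdet_neq_minf k (M : 'M[trop]_k) :
  tdet M <> minf <-> exists s : 'S_k, forall i, M i (s i) <> minf.
Proof.
split=> [tdetM | [s Ms]].
- apply: contrapT => noDiag; apply: tdetM; rewrite /tdet big1 // => s _.
  have [i Mi] : exists i, M i (s i) = minf.
    by apply: contrapT => H; apply: noDiag; exists s => i Mi; apply: H; exists i.
  by rewrite (bigD1 i) //= Mi.
- rewrite /tdet (bigD1 s) //=.
  have : \big[tmul/Some 0%R]_(i < k) M i (s i) <> minf.
    by elim/big_ind: _ => // [[x|] [y|]].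
  by case: (\big[tmul/_]_(i < k) _) => // x _; case: (\big[tadd/minf]_(t | _) _).
Qed.

Definition has_finite_matching m n (A : 'M[trop]_(m, n)) (k : nat) : Prop :=
  exists (f : 'I_k -> 'I_m) (g : 'I_k -> 'I_n),
    [/\ injective f, injective g & forall l, A (f l) (g l) <> minf].

Lemma has_finite_minorE m n (A : 'M[trop]_(m, n)) k :
  has_finite_minor A k <-> has_finite_matching A k.
Proof.
split=> [[f [g [f_inj [g_inj /tdet_neq_minf [s As]]]]] | [f [g [f_inj g_inj Afg]]]].
- exists f, (g \o s); split=> [||l]; first exact: f_inj.
    by apply: inj_comp => //; apply: perm_inj.
  by have := As l; rewrite mxE.
- exists f, g; split=> //; split=> //.
  by apply/tdet_neq_minf; exists 1%g => i; rewrite mxE perm1.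
Qed.

Lemma has_finite_matching0 m n (A : 'M[trop]_(m, n)) : has_finite_matching A 0.
Proof.
have f : 'I_0 -> 'I_m by case.
have g : 'I_0 -> 'I_n by case.
by exists f, g; split=> -[].
Qed.

Lemma has_finite_matching_le_rows m n (A : 'M[trop]_(m, n)) k :
  has_finite_matching A k -> (k <= m)%N.
Proof. by move=> [f [_ [f_inj _ _]]]; have := leq_card _ f_inj; rewrite !card_ord. Qed.

Lemma has_finite_matching_leq m n (A : 'M[trop]_(m, n)) k l :
  (k <= l)%N -> has_finite_matching A l -> has_finite_matching A k.
Proof.
move=> kl [f [g [f_inj g_inj Afg]]].
have w_inj : injective (widen_ord kl) by move=> x y /(congr1 val) /= /val_inj.
exists (f \o widen_ord kl), (g \o widen_ord kl).
by split=> [||x]; [exact: inj_comp | exact: inj_comp | exact: Afg].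
Qed.

Lemma has_finite_matching_support m n (A B : 'M[trop]_(m, n)) k :
  (forall i j, A i j <> minf -> B i j <> minf) ->
  has_finite_matching A k -> has_finite_matching B k.
Proof. by move=> AB [f [g [f_inj g_inj Afg]]]; exists f, g; split=> // l; apply: AB. Qed.

Lemma is_troprankE m n (A : 'M[trop]_(m, n)) k :
  is_troprank A k <-> ~ has_finite_matching A k.+1 /\ has_finite_matching A k.
Proof. by rewrite /is_troprank !has_finite_minorE. Qed.

Lemma troprank_exists m n (A : 'M[trop]_(m, n)) : exists k, is_troprank A k.
Proof.
apply: contrapT => noRank.
have matchings k : has_finite_matching A k.
  elim: k => [|k IHk]; first exact: has_finite_matching0.
  by apply: contrapT => noSk; apply: noRank; exists k; apply/is_troprankE.
by have := has_finite_matching_le_rows (matchings m.+1); rewrite ltnn.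
Qed.

Lemma troprank_unique m n (A : 'M[trop]_(m, n)) k l :
  is_troprank A k -> is_troprank A l -> k = l.
Proof.
move=> /is_troprankE [noSk Ak] /is_troprankE [noSl Al].
case: (ltngtP k l) => // [kl | lk].
- by case: noSk; exact: has_finite_matching_leq Al.
- by case: noSl; exact: has_finite_matching_leq Ak.
Qed.

Lemma is_troprank_eq_matching m n m' n' (A : 'M[trop]_(m, n))
    (B : 'M[trop]_(m', n')) k :
  (forall l, has_finite_matching A l <-> has_finite_matching B l) ->
  is_troprank A k -> is_troprank B k.
Proof. by move=> AB; rewrite !is_troprankE !AB. Qed.

Local Open Scope ring_scope.

Lemma fM_eq_row m n (M : 'M[trop]_(m, n)) i (a b : 'rV[RR]_n) :
  (forall j, M i j <> minf -> a 0 j = b 0 j) -> fM M a 0 i = fM M b 0 i.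
Proof.
move=> ab; rewrite /fM !mxE; congr fin0; apply: eq_bigr => j _.
by case Mij: (M i j) => [c|] //=; rewrite ab // Mij.
Qed.

Lemma fM_Gmn m n (M : 'M[trop]_(m, n)) i j c (a : 'rV[RR]_n) :
  in_Gmn M -> M i j = Some c -> fM M a 0 i = c + a 0 j.
Proof.
move=> MG Mij; rewrite /fM !mxE (bigD1 j) //= big1 ?Mij //= => j' j'j.
case Mij': (M i j') => [c'|] //.
by move/eqP: j'j; case; apply: (MG i); rewrite ?Mij ?Mij'.
Qed.

(* The i-th coordinate of f_{A'} a is c + a_j; if no chain of finite entries
   linked i to j, the composite would not depend on a_j. *)
Lemma fM_comp_finite_path m n (A A' : 'M[trop]_(m, n)) (tE : 'M[trop]_n)
    (tF : 'M[trop]_m) :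
  in_Gmn A' -> (forall a, fM A' a = fM tF (fM A (fM tE a))) ->
  forall i j, A' i j <> minf ->
  exists j' j1, [/\ tF i j' <> minf, A j' j1 <> minf & tE j1 j <> minf].
Proof.
move=> A'G A'E i j; case A'ij: (A' i j) => [c|] // _.
apply: contrapT => noPath.
pose b : 'rV[RR]_n := \row_l (if l == j then 1 else 0).
have : fM A' 0 0 i = fM A' b 0 i.
  rewrite !A'E; apply: fM_eq_row => j' Fj'; apply: fM_eq_row => j1 Aj1.
  apply: fM_eq_row => l El; rewrite !mxE; case: eqP => // lj; subst l.
  by case: noPath; exists j', j1.
rewrite (fM_Gmn 0 A'G A'ij) (fM_Gmn b A'G A'ij) !mxE eqxx => /addrI /eqP.
by rewrite eq_sym oner_eq0.
Qed.

Lemma has_finite_matching_fM_comp m n (A A' : 'M[trop]_(m, n))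
    (tE : 'M[trop]_n) (tF : 'M[trop]_m) k :
  in_Gmn A' -> in_Gr tE -> in_Gr tF ->
  (forall a, fM A' a = fM tF (fM A (fM tE a))) ->
  has_finite_matching A' k -> has_finite_matching A k.
Proof.
move=> A'G [tE_row _] [_ tF_col] A'E [f [g [f_inj g_inj A'fg]]].
have [J' J'P] := choice (fun l => fM_comp_finite_path A'G A'E (A'fg l)).
have J1ex l : exists j1, A (J' l) j1 <> minf /\ tE j1 (g l) <> minf.
  by have [j1 [_ ? ?]] := J'P l; exists j1.
have [J1 J1P] := choice J1ex.
exists J', J1; split=> [l l' J'l | l l' J1l | l]; last by case: (J1P l).
- apply: f_inj; have [i0 [_ i0_uniq]] := tF_col (J' l).
  have [_ [Fl _ _]] := J'P l; have [_ [Fl' _ _]] := J'P l'.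
  by rewrite -(i0_uniq _ Fl) (i0_uniq (f l')) // J'l.
- apply: g_inj; have [j0 [_ j0_uniq]] := tE_row (J1 l).
  have [_ El] := J1P l; have [_ El'] := J1P l'.
  by rewrite -(j0_uniq _ El) (j0_uniq (g l')) // J1l.
Qed.

Lemma reg_entries_finite (T : topologicalType) (reg : set T -> (T -> RR) -> Prop)
    m n (U : set T) (A : T -> 'M[trop]_(m, n)) x y :
  reg_entries reg U A -> U x -> U y ->
  forall i j, A x i j <> minf -> A y i j <> minf.
Proof.
move=> Areg Ux Uy i j; case: (Areg i j) => [Amin | [g [_ Ag]]]; first by rewrite Amin.
by rewrite !Ag.
Qed.

Section MorphismCharts.

Variables (T : topologicalType) (reg : set T -> (T -> RR) -> Prop) (e f : nat).
Variables (E : trop_bundle reg e) (F : trop_bundle reg f) (phi : tot E -> tot F).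
Hypothesis phi_proj : forall v, Defs.proj (phi v) = Defs.proj v.

Lemma morph_chart_change i j U A i' j' U' A' x :
  morph_chart phi i j U A -> morph_chart phi i' j' U' A' -> U x -> U' x ->
  forall a, fM (A' x) a = fM (trans j' j x) (fM (A x) (fM (trans i i' x) a)).
Proof.
move=> [_ sU _ _ phiU] [_ sU' _ _ phiU'] Ux U'x a.
have [ix jx] := sU x Ux; have [i'x j'x] := sU' x U'x.
set b := fM (trans i i' x) a.
have chartE : triv_inv i' (x, a) = triv_inv i (x, b).
  by rewrite -(trans_act a ix i'x) triv_invK // triv_inv_proj.
have phiE : phi (triv_inv i (x, b)) = triv_inv j (x, fM (A x) b).
  by rewrite -(phiU x b Ux) triv_invK // phi_proj triv_inv_proj.
by have := phiU' x a U'x; rewrite chartE phiE trans_act // => -[].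
Qed.

Lemma morph_chart_matching i j U A i' j' U' A' p :
  morph_chart phi i j U A -> morph_chart phi i' j' U' A' -> U p -> U' p ->
  forall k, has_finite_matching (A p) k <-> has_finite_matching (A' p) k.
Proof.
move=> chA chA' Up U'p k.
have [_ sU AG _ _] := chA; have [_ sU' A'G _ _] := chA'.
have [ip jp] := sU p Up; have [i'p j'p] := sU' p U'p.
split.
- apply: has_finite_matching_fM_comp (AG p Up) (trans_G i'p ip) (trans_G jp j'p) _.
  exact: morph_chart_change chA' chA U'p Up.
- apply: has_finite_matching_fM_comp (A'G p U'p) (trans_G ip i'p) (trans_G j'p jp) _.
  exact: morph_chart_change chA chA' Up U'p.
Qed.

End MorphismCharts.

Theorem mainTheorem4 (T : topologicalType) (reg : set T -> (T -> RR) -> Prop)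
    (e f : nat) (E : trop_bundle reg e) (F : trop_bundle reg f)
    (phi : tot E -> tot F) :
  is_bundle_morphism phi ->
  exists rk : T -> nat,
    (* well defined: for every common local trivialization containing p,
       troprank(phi_p) = troprank(A(p)) = rk p *)
    (forall (p : T) (i : idx E) (j : idx F) (U : set T)
            (A : T -> 'M[trop]_(f, e)),
        morph_chart phi i j U A -> U p -> is_troprank (A p) (rk p)) /\
    (* locally constant *)
    (forall p : T, exists V : set T, [/\ open V, V p &
        forall q, V q -> rk q = rk p]).
Proof.
move=> [phi_proj charts].
have rank_at p : exists k, exists i j U A,
    [/\ morph_chart phi i j U A, U p & is_troprank (A p) k].
  have [i [j [U [A [chA Up]]]]] := charts p.
  have [k rkA] := troprank_exists (A p).
  by exists k, i, j, U, A.
have [rk rkP] := choice rank_at.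
have rk_chart p i j U A : morph_chart phi i j U A -> U p -> is_troprank (A p) (rk p).
  move=> chA Up; have [i' [j' [U' [A' [chA' U'p rkA']]]]] := rkP p.
  exact: is_troprank_eq_matching (morph_chart_matching phi_proj chA' chA U'p Up) rkA'.
exists rk; split=> // p.
have [i [j [U [A [chA Up]]]]] := charts p.
have [U_open _ _ Areg _] := chA.
exists U; split=> // q Uq.
apply: troprank_unique (rk_chart _ _ _ _ _ chA Uq) _.
apply: is_troprank_eq_matching (rk_chart _ _ _ _ _ chA Up) => k.
have AqE := reg_entries_finite Areg Up Uq.
have ApE := reg_entries_finite Areg Uq Up.
by split; apply: has_finite_matching_support.
Qed.
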